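(* Let $R$ be a commutative ring and $S$ a multiplicative subset of $R$. Then $R$ has $u$-$S$-Noetherian spectrum if and only if the polynomial ring $R[X]$ has $u$-$S$-Noetherian spectrum (where $S$ is regarded as a multiplicative subset of $R[X]$ via $R\subseteq R[X]$).
   Context: A ring $A$ with multiplicative subset $S$ has uniformly $S$-Noetherian ($u$-$S$-Noetherian) spectrum if there exists a single $s\in S$ such that for every ideal $I$ of $A$ there is a finitely generated ideal $J\subseteq I$ with $sI\subseteq\sqrt{J}$ (so $sI\subseteq\sqrt J\subseteq\sqrt I$). *)

From HB Require Import structures.
From mathcomp Require Import all_boot all_order all_algebra.
Set Implicit Arguments. Unset Strict Implicit. Unset Printing Implicit Defensive.
Import GRing.Theory.
Local Open Scope ring_scope.

Definition mult_subset (R : comNzRingType) (S : R -> Prop) : Prop :=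
  S 1 /\ (forall a b, S a -> S b -> S (a * b)).

Definition is_ideal (R : comNzRingType) (I : R -> Prop) : Prop :=
  [/\ I 0, (forall x y, I x -> I y -> I (x + y)) &
      (forall a x, I x -> I (a * x))].

Definition ideal_span (R : comNzRingType) (l : seq R) : R -> Prop :=
  fun x => exists c : seq R, size c = size l /\
             x = \sum_(i < size l) c`_i * l`_i.

Definition fg_ideal (R : comNzRingType) (J : R -> Prop) : Prop :=
  exists l : seq R, forall x, J x <-> ideal_span l x.

Definition radical (R : comNzRingType) (J : R -> Prop) : R -> Prop :=
  fun x => exists n : nat, J (x ^+ n).

Definition u_S_noeth_spectrum (R : comNzRingType) (S : R -> Prop) : Prop :=
  exists s, S s /\
    forall I : R -> Prop, is_ideal I ->
      exists J : R -> Prop, fg_ideal J /\ (forall x, J x -> I x) /\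
        (forall x, I x -> radical J (s * x)).

Definition poly_mult_subset (R : comNzRingType) (S : R -> Prop) : {poly R} -> Prop :=
  fun p => exists s, S s /\ p = s%:P.

From mathcomp Require Import all_boot all_order all_algebra.
From mathcomp Require Import zify ring.
From mathcomp Require Import boolp classical_sets.
Set Implicit Arguments. Unset Strict Implicit. Unset Printing Implicit Defensive.
Import GRing.Theory.
Local Open Scope ring_scope.
Local Open Scope classical_set_scope.

(* Evaluating generators at 0 transports uniform radical finiteness from R[X]
   down to R. Conversely, let s work for R. If some ideal of R[X] were not
   radically finite for s, Zorn's lemma would give a maximal such ideal P; let
   p be its ideal of constants, with s p contained in the radical of a finitely
   generated l. If all leading coefficients of elements of P lie in p, then so do
   all their coefficients, and l generates s P up to radical. Otherwise take
   f in P of least degree whose leading coefficient c is not in p: P + (c) is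
   radically finite by maximality, and pseudo-division by f (whose remainders
   have all coefficients in p) puts s g c in the radical of (f, l) for g in P;
   together these show that P is radically finite after all. *)

Section Ideals.
Variable T : comNzRingType.
Implicit Types (I J : set T) (l : seq T) (x y a : T).

Lemma ideal_sum I (X : Type) (r : seq X) (F : X -> T) :
  is_ideal I -> (forall i, I (F i)) -> I (\sum_(i <- r) F i).
Proof. by case=> I0 ID _ IF; apply: big_ind. Qed.

Lemma idealMr I x a : is_ideal I -> I x -> I (x * a).
Proof. by case=> _ _ IM Ix; rewrite mulrC; apply: IM. Qed.

Lemma idealB I x y : is_ideal I -> I x -> I y -> I (x - y).
Proof. by case=> _ ID IM Ix Iy; apply: ID => //; rewrite -mulN1r; apply: IM. Qed.

Lemma idealMn I x n : is_ideal I -> I x -> I (x *+ n).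
Proof. by case=> _ _ IM Ix; rewrite -mulr_natl; apply: IM. Qed.

Lemma ideal_preim (U : comNzRingType) (f : {rmorphism T -> U}) (K : set U) :
  is_ideal K -> is_ideal (f @^-1` K).
Proof.
case=> K0 KD KM; split; rewrite /preimage /=.
- by rewrite rmorph0.
- by move=> x y Kx Ky; rewrite rmorphD; apply: KD.
- by move=> a x Kx; rewrite rmorphM; apply: KM.
Qed.

Lemma ideal_span_nil x : ideal_span [::] x <-> x = 0.
Proof.
split; first by case=> c [_ ->]; rewrite big_ord0.
by move=> ->; exists [::]; rewrite big_ord0.
Qed.

Lemma ideal_span_cons a l x :
  ideal_span (a :: l) x <-> exists k y, ideal_span l y /\ x = k * a + y.
Proof.
split.
  case=> [[|k c]] [//= /eqP]; rewrite eqSS => /eqP hc ->.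
  exists k, (\sum_(i < size l) c`_i * l`_i); split; first by exists c.
  by rewrite big_ord_recl.
case=> k [y [[c [hc ->]] ->]]; exists (k :: c); split; first by rewrite /= hc.
by rewrite big_ord_recl.
Qed.

Lemma ideal_span_ideal l : is_ideal (ideal_span l).
Proof.
elim: l => [|a l [I0 ID IM]].
  split.
  - exact/(ideal_span_nil 0).
  - by move=> x y /ideal_span_nil -> /ideal_span_nil ->; apply/ideal_span_nil; rewrite addr0.
  - by move=> b x /ideal_span_nil ->; apply/ideal_span_nil; rewrite mulr0.
split.
- by apply/ideal_span_cons; exists 0, 0; rewrite mul0r addr0.
- move=> x y /ideal_span_cons [k [u [hu ->]]] /ideal_span_cons [k' [v [hv ->]]].
  apply/ideal_span_cons; exists (k + k'), (u + v); split; first exact: ID.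
  by rewrite mulrDl -!addrA (addrCA u).
- move=> b x /ideal_span_cons [k [u [hu ->]]]; apply/ideal_span_cons.
  by exists (b * k), (b * u); split; [apply: IM | rewrite mulrDr mulrA].
Qed.

Lemma ideal_span_min I l : is_ideal I -> (forall y, y \in l -> I y) ->
  ideal_span l `<=` I.
Proof.
move=> idealI; elim: l => [|a l IH] lI x; first by move/ideal_span_nil ->; case: idealI.
case/ideal_span_cons => k [y [hy ->]]; case: (idealI) => _ ID IM; apply: ID.
  by apply: IM; apply: lI; rewrite mem_head.
by apply: IH => // z hz; apply: lI; rewrite inE hz orbT.
Qed.

Lemma ideal_span_mem l x : x \in l -> ideal_span l x.
Proof.
elim: l => [//|a l IH]; rewrite inE => /orP [/eqP ->|hx]; apply/ideal_span_cons.
  by exists 1, 0; rewrite mul1r addr0; split=> //; case: (ideal_span_ideal l).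
by exists 0, x; rewrite mul0r add0r; split=> //; apply: IH.
Qed.

Lemma ideal_span_subseq l l' : {subset l <= l'} -> ideal_span l `<=` ideal_span l'.
Proof.
by move=> ll'; apply: ideal_span_min (ideal_span_ideal l') _ => y /ll'; apply: ideal_span_mem.
Qed.

Lemma radical_id J x : J x -> radical J x.
Proof. by exists 1%N; rewrite expr1. Qed.

Lemma sub_radical J J' x : J `<=` J' -> radical J x -> radical J' x.
Proof. by move=> JJ' [n hn]; exists n; apply: JJ'. Qed.

Lemma radicalMl J a x : is_ideal J -> radical J x -> radical J (a * x).
Proof. by case=> _ _ IM [n hn]; exists n; rewrite exprMn; apply: IM. Qed.

Lemma radical_pow J x k : radical J (x ^+ k) -> radical J x.
Proof. by case=> n hn; exists (k * n)%N; rewrite exprM. Qed.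

Lemma radicalD J x y : is_ideal J -> radical J x -> radical J y -> radical J (x + y).
Proof.
move=> idealJ [n hn] [m hm]; exists (n + m)%N; rewrite exprDn.
apply: ideal_sum => // i; apply: idealMn => //; case: (idealJ) => _ _ IM.
have [mi|im] := leqP m i.
  by rewrite -(subnK mi) exprD mulrA; apply: IM.
rewrite (_ : n + m - i = m - i + n)%N; last by lia.
by rewrite exprD mulrAC; apply: IM.
Qed.

Lemma radical_dropX J x y m : is_ideal J ->
  radical J (x * y ^+ m) -> radical J (x * y).
Proof.
move=> idealJ h; apply: (@radical_pow _ _ m.+1).
rewrite (_ : (x * y) ^+ m.+1 = (x ^+ m * y) * (x * y ^+ m)); first exact: radicalMl.
by rewrite exprMn exprS exprSr; move: (x ^+ m) (y ^+ m) => u v; ring.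
Qed.

Definition ideal_adjoin J y : set T := fun z => exists j k, J j /\ z = j + k * y.

Lemma ideal_adjoin_ideal J y : is_ideal J -> is_ideal (ideal_adjoin J y).
Proof.
case=> I0 ID IM; split.
- by exists 0, 0; rewrite mul0r addr0.
- move=> _ _ [j [k [Jj ->]]] [j' [k' [Jj' ->]]]; exists (j + j'), (k + k').
  by split; [apply: ID | rewrite mulrDl -!addrA (addrCA (k * y))].
- move=> a _ [j [k [Jj ->]]]; exists (a * j), (a * k).
  by split; [apply: IM | rewrite mulrDr mulrA].
Qed.

Lemma sub_ideal_adjoin J y : J `<=` ideal_adjoin J y.
Proof. by move=> x Jx; exists x, 0; rewrite mul0r addr0. Qed.

Lemma exprD_ideal J a j m : is_ideal J -> J j ->
  exists2 j', J j' & (a + j) ^+ m = a ^+ m + j'.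
Proof.
move=> idealJ Jj; case: (idealJ) => J0 JD JM; elim: m => [|m [j' Jj' hm]].
  by exists 0; rewrite ?expr0 ?addr0.
exists (j' * (a + j) + a ^+ m * j); first by apply: JD; [apply: idealMr | apply: JM].
by rewrite exprSr hm exprSr; ring.
Qed.

Lemma radical_adjoin J x y : is_ideal J -> radical J (x * y) ->
  radical (ideal_adjoin J y) x -> radical J x.
Proof.
move=> idealJ [m hm] [n [j [k [Jj hx]]]].
have [j' Jj' hj'] := exprD_ideal (k * y) m idealJ Jj.
exists (n * m + m)%N; rewrite exprD exprM hx addrC hj' mulrDl.
case: (idealJ) => _ JD JM; apply: JD; last exact: idealMr.
by rewrite exprMn -mulrA -exprMn (mulrC y); apply: JM.
Qed.

Lemma ideal_adjoin_seq J y l : (forall x, x \in l -> ideal_adjoin J y x) ->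
  exists ly : seq T, (forall z, z \in ly -> J z) /\
    forall x, x \in l -> exists z k, z \in ly /\ x = z + k * y.
Proof.
elim: l => [|a l IH] hl; first by exists [::].
have [|ly [lyJ lyl]] := IH; first by move=> x hx; apply: hl; rewrite inE hx orbT.
have [z [k [Jz ->]]] := hl a (mem_head _ _).
exists (z :: ly); split; first by move=> z'; rewrite inE => /orP [/eqP ->|/lyJ].
move=> x; rewrite inE => /orP [/eqP ->|/lyl [z' [k' [hz' ->]]]].
  by exists z, k; rewrite mem_head.
by exists z', k'; rewrite inE hz' orbT.
Qed.

Definition rad_fin (s : T) I := exists l, (forall y, y \in l -> I y) /\
  forall x, I x -> radical (ideal_span l) (s * x).

Lemma u_S_noeth_spectrumP (S : set T) :
  u_S_noeth_spectrum S <-> exists2 s, S s & forall I, is_ideal I -> rad_fin s I.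
Proof.
split.
  case=> s [Ss H]; exists s => // I idealI; have [J [[l hl] [JI radJ]]] := H I idealI.
  exists l; split; first by move=> y hy; apply: JI; apply/hl; apply: ideal_span_mem.
  by move=> x Ix; apply: sub_radical (radJ x Ix) => z /hl.
case=> s Ss H; exists s; split=> // I idealI; have [l [lI radl]] := H I idealI.
exists (ideal_span l); split; first by exists l.
by split=> //; apply: ideal_span_min.
Qed.

Lemma bigcup_chain_ideal (X : Type) (F : set X) (A : X -> set T) i0 :
  F i0 -> (forall i, F i -> is_ideal (A i)) -> total_on F (fun i j => A i `<=` A j) ->
  is_ideal (\bigcup_(i in F) A i).
Proof.
move=> Fi0 idealA chainA; split.
- by exists i0 => //; case: (idealA i0 Fi0).
- move=> x y [i Fi Aix] [j Fj Ajy].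
  have [Aij|Aji] := chainA i j Fi Fj.
    by exists j => //; case: (idealA j Fj) => _ AD _; apply: AD => //; apply: Aij.
  by exists i => //; case: (idealA i Fi) => _ AD _; apply: AD => //; apply: Aji.
- by move=> a x [i Fi Aix]; exists i => //; case: (idealA i Fi) => _ _; apply.
Qed.

Lemma bigcup_chain_seq (X : Type) (F : set X) (A : X -> set T) i0 l :
  F i0 -> total_on F (fun i j => A i `<=` A j) ->
  (forall y, y \in l -> (\bigcup_(i in F) A i) y) ->
  exists2 i, F i & forall y, y \in l -> A i y.
Proof.
move=> Fi0 chainA; elim: l => [|a l IH] hl; first by exists i0.
have [|i Fi li] := IH; first by move=> y hy; apply: hl; rewrite inE hy orbT.
have [j Fj Aja] := hl a (mem_head _ _).
have [Aij|Aji] := chainA i j Fi Fj.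
  by exists j => // y; rewrite inE => /orP [/eqP ->|/li/Aij].
by exists i => // y; rewrite inE => /orP [/eqP ->|/li]; [apply: Aji|].
Qed.

(* Zorn's lemma applies because a finite list of generators of the union of a
   chain already lies in one of its members. *)
Lemma exists_maximal_not_rad_fin (s : T) I0 : is_ideal I0 -> ~ rad_fin s I0 ->
  exists P, [/\ is_ideal P, ~ rad_fin s P &
    forall Q, is_ideal Q -> P `<` Q -> rad_fin s Q].
Proof.
move=> idealI0 badI0.
pose bad A := [/\ is_ideal A, ~ rad_fin s A & I0 `<=` A].
pose le (A B : {A | bad A}) := `[< sval A `<=` sval B >].
have badI0' : bad I0 by split.
have [||F chainF|[P [idealP badP I0P]] maxP] := ZL_preorder (exist _ I0 badI0') (R := le).
- by move=> A; apply/asboolP.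
- by move=> A B C /asboolP AB /asboolP BC; apply/asboolP; apply: subset_trans BC.
- have [[A0 FA0]|noF] := pselect (exists A, F A); last first.
    by exists (exist _ I0 badI0') => A FA; case: noF; exists A.
  have chain : total_on F (fun A B => sval A `<=` sval B).
    by move=> A B FA FB; case: (chainF A B FA FB) => /asboolP; [left|right].
  have badU : bad (\bigcup_(A in F) sval A).
    split.
    - by apply: bigcup_chain_ideal FA0 _ chain => A _; case: (svalP A).
    - case=> l [lU radU]; have [A FA lA] := bigcup_chain_seq FA0 chain lU.
      case: (svalP A) => _ badA _; apply: badA; exists l; split=> // x Ax.
      by apply: radU; exists A.
    - by move=> x I0x; exists A0 => //; case: (svalP A0) => _ _; apply.
  by exists (exist _ _ badU) => A FA; apply/asboolP => x Ax; exists A.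
exists P; split=> // Q idealQ [PQ QP]; apply: contrapT => badQ.
have badQ' : bad Q by split=> //; apply: subset_trans PQ.
by apply: QP; apply/asboolP; apply: (maxP (exist _ Q badQ')); apply/asboolP.
Qed.

End Ideals.

Lemma ideal_span_map (T U : comNzRingType) (f : {rmorphism T -> U}) l x :
  ideal_span l x -> ideal_span (map f l) (f x).
Proof.
elim: l x => [|a l IH] x.
  by move/ideal_span_nil ->; apply/ideal_span_nil; rewrite rmorph0.
case/ideal_span_cons => k [y [hy ->]]; apply/ideal_span_cons; exists (f k), (f y).
by rewrite rmorphD rmorphM; split=> //; apply: IH.
Qed.

Lemma radical_map (T U : comNzRingType) (f : {rmorphism T -> U}) l x :
  radical (ideal_span l) x -> radical (ideal_span (map f l)) (f x).
Proof. by case=> n hn; exists n; rewrite -rmorphXn; apply: ideal_span_map. Qed.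

Lemma ex_minimizer (X : Type) (m : X -> nat) (A : set X) :
  (exists x, A x) -> exists x, A x /\ forall y, A y -> (m x <= m y)%N.
Proof.
case=> x Ax; have exn : exists n, `[< exists2 x, A x & m x = n >].
  by exists (m x); apply/asboolP; exists x.
case: (ex_minnP exn) => _ /asboolP [y Ay <-] ymin.
by exists y; split=> // z Az; apply: ymin; apply/asboolP; exists z.
Qed.

Lemma radical_span_polyC (R : comNzRingType) (s : R) (l : seq R) (g : {poly R}) :
  (forall i, radical (ideal_span l) (s * g`_i)) ->
  radical (ideal_span (map polyC l)) (s%:P * g).
Proof.
move=> radg; have idealL := ideal_span_ideal (map polyC l).
rewrite -[g]coefK poly_def mulr_sumr; apply: (big_ind (radical _)).
- by apply: radical_id; case: idealL.
- by move=> x y; apply: radicalD.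
move=> i _; rewrite -mul_polyC mulrA -polyCM mulrC; apply: radicalMl => //.
exact: radical_map.
Qed.

Section PolyIdeal.
Variables (R : comNzRingType) (s : R) (P : set {poly R}) (lp : seq R).
Hypothesis idealP : is_ideal P.
Hypothesis lp_sub : forall a, a \in lp -> P a%:P.
Hypothesis lp_rad : forall a, P a%:P -> radical (ideal_span lp) (s * a).
Let L := map polyC lp.

Lemma polyC_lp_sub y : y \in L -> P y.
Proof. by case/mapP => a ha ->; apply: lp_sub. Qed.

Lemma coef_in_contraction n (g : {poly R}) : (size g <= n)%N -> P g ->
  (forall h, P h -> (size h <= size g)%N -> P (lead_coef h)%:P) ->
  forall i, P (g`_i)%:P.
Proof.
have P0 : P 0 by case: idealP.
elim: n g => [|n IH] g sg Pg leadP i.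
  by move: sg; rewrite leqn0 size_poly_eq0 => /eqP ->; rewrite coef0 polyC0.
have [->|gn0] := eqVneq g 0; first by rewrite coef0 polyC0.
have sg0 : (0 < size g)%N by rewrite size_poly_gt0.
set g' := g - (lead_coef g)%:P * 'X^((size g).-1).
have Pg' : P g' by apply: idealB => //; apply: idealMr => //; apply: leadP.
have sg' : (size g' <= (size g).-1)%N.
  apply/leq_sizeP => j hj; rewrite coefB coefCM coefXn.
  case: eqP => [->|hne]; first by rewrite mulr1 lead_coefE subrr.
  by rewrite mulr0 subr0 nth_default //; move: hj hne sg0; case: (size g) => //= k; lia.
have -> : g`_i = g'`_i + lead_coef g * 'X^((size g).-1)`_i.
  by rewrite /g' coefB coefCM subrK.
case: idealP => _ PD PM; rewrite polyCD polyCM mulrC; apply: PD; last first.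
  by apply: PM; apply: leadP.
apply: (IH g') => //; first lia.
by move=> h Ph hh; apply: leadP => //; lia.
Qed.

Lemma radical_mul_lead_coef (J : set {poly R}) (f g : {poly R}) :
  is_ideal J -> J f -> ideal_span L `<=` J -> f != 0 -> P f -> P g ->
  (forall r, P r -> (size r < size f)%N -> forall i, P (r`_i)%:P) ->
  radical J (s%:P * g * (lead_coef f)%:P).
Proof.
move=> idealJ Jf LJ fn0 Pf Pg small.
apply: (@radical_dropX _ _ _ _ (Pdiv.Ring.rscalp g f) idealJ).
have := Pdiv.ComRing.rdivp_eq f g; rewrite -mul_polyC.
set q := Pdiv.Ring.rdivp g f; set r := Pdiv.Ring.rmodp g f => divfg.
have Pr : P r.
  have -> : r = (lead_coef f ^+ Pdiv.Ring.rscalp g f)%:P * g - q * f.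
    by rewrite divfg addrC addKr.
  by apply: idealB => //; case: idealP => _ _; apply.
rewrite -mulrA (mulrC g) -rmorphXn divfg mulrDr; apply: radicalD => //.
  by apply: radical_id; rewrite mulrA; case: idealJ => _ _; apply.
apply: sub_radical LJ _; apply: radical_span_polyC => i; apply: lp_rad.
by apply: small => //; apply: Pdiv.CommonRing.ltn_rmodpN0.
Qed.

Lemma rad_fin_poly_of_proper :
  (forall Q, is_ideal Q -> P `<` Q -> rad_fin s%:P Q) -> rad_fin s%:P P.
Proof.
move=> maxP.
have [hex|noc] := pselect (exists f, P f /\ ~ P (lead_coef f)%:P); last first.
  exists L; split=> [y|g Pg]; first exact: polyC_lp_sub.
  apply: radical_span_polyC => i; apply: lp_rad.
  apply: (coef_in_contraction (leqnn _)) => // h Ph _; apply: contrapT => hc.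
  by apply: noc; exists h.
have [f [[Pf cf] fmin]] := ex_minimizer (size : {poly R} -> nat) hex.
set c := lead_coef f in cf.
have fn0 : f != 0.
  by apply/eqP => f0; apply: cf; rewrite /c f0 lead_coef0 polyC0; case: idealP.
have small r : P r -> (size r < size f)%N -> forall i, P (r`_i)%:P.
  move=> Pr ltrf; apply: (coef_in_contraction (leqnn _)) => // h Ph hr.
  by apply: contrapT => hc; have := fmin h (conj Ph hc); lia.
have [lq [lqQ radQ]] : rad_fin s%:P (ideal_adjoin P c%:P).
  apply: maxP; first exact: ideal_adjoin_ideal.
  split; first exact: sub_ideal_adjoin.
  move=> QP; apply: cf; apply: QP; exists 0, 1.
  by rewrite add0r mul1r; split=> //; case: idealP.
have [ly [lyP lyQ]] := ideal_adjoin_seq lqQ.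
pose J := f :: L ++ ly; have idealJ := ideal_span_ideal J.
exists J; split=> [y|g Pg].
  by rewrite inE mem_cat => /orP [/eqP ->|/orP [/polyC_lp_sub|/lyP]].
apply: (@radical_adjoin _ _ _ c%:P idealJ).
  apply: radical_mul_lead_coef => //; first by apply: ideal_span_mem; rewrite mem_head.
  by apply: ideal_span_subseq => y hy; rewrite inE mem_cat hy orbT.
have /radQ : ideal_adjoin P c%:P g by apply: sub_ideal_adjoin.
apply: sub_radical.
apply: ideal_span_min; first exact: ideal_adjoin_ideal.
move=> x /lyQ [y [k [hy ->]]]; exists y, k; split=> //.
by apply: ideal_span_mem; rewrite inE mem_cat hy !orbT.
Qed.

End PolyIdeal.

Lemma u_S_noeth_spectrum_poly (R : comNzRingType) (S : set R) :
  u_S_noeth_spectrum S -> u_S_noeth_spectrum (poly_mult_subset S).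
Proof.
case/u_S_noeth_spectrumP => s Ss radR; apply/u_S_noeth_spectrumP.
exists s%:P; first by exists s.
move=> I idealI; apply: contrapT => badI.
have [P [idealP badP maxP]] := exists_maximal_not_rad_fin idealI badI.
have [lp [lp_sub lp_rad]] := radR _ (ideal_preim polyC idealP).
by apply: badP; apply: rad_fin_poly_of_proper lp_sub lp_rad maxP.
Qed.

Lemma u_S_noeth_spectrum_of_poly (R : comNzRingType) (S : set R) :
  u_S_noeth_spectrum (poly_mult_subset S) -> u_S_noeth_spectrum S.
Proof.
case/u_S_noeth_spectrumP => _ [s [Ss ->]] radRX; apply/u_S_noeth_spectrumP.
exists s => // I [I0 ID IM].
pose IX (g : {poly R}) := forall i, I g`_i.
have idealIX : is_ideal IX.
  split=> [i|x y Ix Iy i|a x Ix i]; first by rewrite coef0.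
    by rewrite coefD; apply: ID.
  by rewrite coefM; apply: ideal_sum => // j; apply: IM.
have [l [lIX radl]] := radRX IX idealIX.
exists (map (horner_eval 0) l); split.
  by move=> _ /mapP [g gl ->]; rewrite horner_evalE horner_coef0; apply: lIX.
move=> x Ix; have IXx : IX x%:P by move=> i; rewrite coefC; case: eqP.
by have := radical_map (horner_eval 0) (radl _ IXx); rewrite rmorphM /= !horner_evalE !hornerC.
Qed.

Theorem theorem4p3 (R : comNzRingType) (S : R -> Prop) :
  mult_subset S ->
  (u_S_noeth_spectrum S <-> u_S_noeth_spectrum (poly_mult_subset S)).
Proof.
by move=> _; split; [apply: u_S_noeth_spectrum_poly | apply: u_S_noeth_spectrum_of_poly].
Qed.
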